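(* Let $H$ and $K$ be finite groups with $\mathrm{MaxDim}(K) = i(K)$. Then $\mathrm{MaxDim}(H \times K) = \mathrm{MaxDim}(H) + \mathrm{MaxDim}(K)$.
   Context: All groups are finite. A subset $s$ of a group is irredundant if $\langle s \setminus \{h\}\rangle \neq \langle s \rangle$ for every $h \in s$; $i(G)$ is the maximal size of an irredundant subset of $G$. A finite set $\{H_1,\dots,H_n\}$ of subgroups of a group $G$ is in general position if for every $1 \le j \le n$, $\bigcap_{i \neq j} H_i \supsetneq \bigcap_{i} H_i$. $\mathrm{MaxDim}(G)$ is the largest cardinality of a collection of maximal subgroups of $G$ that is in general position. *)

From mathcomp Require Import all_boot all_fingroup all_solvable.
Set Implicit Arguments. Unset Strict Implicit. Unset Printing Implicit Defensive.
Local Open Scope group_scope.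

Definition irredundant (gT : finGroupType) (s : {set gT}) : bool :=
  [forall h in s, <<s :\ h>> != <<s>>].

Definition irr_num (gT : finGroupType) : nat :=
  \max_(s : {set gT} | irredundant s) #|s|.

Definition gen_position (gT : finGroupType) (P : {set {set gT}}) : bool :=
  [forall M in P, (\bigcap_(N in P) N) \proper (\bigcap_(N in P | N != M) N)].

Definition MaxDim (gT : finGroupType) : nat :=
  \max_(P : {set {set gT}} |
          [forall M in P, maximal M [set: gT]] && gen_position P) #|P|.

(* Pulling back maximal subgroups of H and of K along the projections gives
   MaxDim H + MaxDim K <= MaxDim (H * K).  Conversely, let P be a family of
   maximal subgroups of H * K in general position, and T a minimal subfamily
   whose intersection agrees with that of P on H * 1.  The key fact is that a
   maximal subgroup M of H * K not containing (h, 1) lies, on H * 1, below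
   Y * 1 for some maximal subgroup Y of H avoiding h.  Minimality of T then yields
   |T| maximal subgroups of H in general position, while the second
   coordinates of general-position witnesses of the members of P \ T form an
   irredundant subset of K.  Hence |P| <= MaxDim H + i(K). *)

From mathcomp Require Import all_boot all_fingroup all_solvable.
Set Implicit Arguments. Unset Strict Implicit. Unset Printing Implicit Defensive.
Local Open Scope group_scope.

Section MaximalFamilies.

Variable gT : finGroupType.
Implicit Types (A M : {set gT}) (P : {set {set gT}}).

Lemma maximal_group_set M A : maximal M A -> group_set M.
Proof. by case/maxsetP=> /andP[]. Qed.

Lemma maximal1 M A : maximal M A -> 1 \in M.
Proof. by move/maximal_group_set=> gM; apply: (group1 (Group gM)). Qed.

Lemma group_set_bigcap_in P :
  {in P, forall M, group_set M} -> group_set (\bigcap_(M in P) M).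
Proof.
move=> gP; apply/group_setP; split.
  by apply/bigcapP=> M /gP gM; apply: (group1 (Group gM)).
move=> x y /bigcapP xP /bigcapP yP; apply/bigcapP=> M MP.
by apply: (@groupM _ (Group (gP M MP))); [apply: xP | apply: yP].
Qed.

Lemma gen_positionP P :
  reflect {in P, forall M, exists2 x, x \in \bigcap_(N in P | N != M) N & x \notin M}
          (gen_position P).
Proof.
apply: (iffP forall_inP) => genP M MP;
  have capP : \bigcap_(N in P) N = M :&: \bigcap_(N in P | N != M) N
    by rewrite (bigD1 M).
  have /properP[_ [x xP' xM]] := genP M MP; rewrite capP in xM.
  by exists x => //; apply: contra xM => xM; rewrite inE xM.
have [x xP' xM] := genP M MP; rewrite capP; apply/properP; split.
  exact: subsetIr.
by exists x => //; rewrite inE (negbTE xM).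
Qed.

Lemma gen_position_separated P : gen_position P ->
  exists x : {set gT} -> gT, {in P &, forall M N : {set gT}, (x M \in N) = (M != N)}.
Proof.
move/gen_positionP=> genP.
have /fin_all_exists[x xP] : forall M, exists x : gT, M \in P ->
    x \in \bigcap_(N in P | N != M) N /\ x \notin M.
  move=> M; have [MP | _] := boolP (M \in P); last by exists 1.
  by have [x ? ?] := genP M MP; exists x.
exists x => M N MP NP; have [/bigcapP xP' xM] := xP M MP.
have [<- | neMN] := eqVneq M N; first exact: negbTE.
by apply: xP'; rewrite NP eq_sym.
Qed.

Lemma leq_card_MaxDim P :
  {in P, forall M, maximal M [set: gT]} -> gen_position P -> #|P| <= MaxDim gT.
Proof.
move=> maxP genP; apply: (leq_bigmax_cond (F := fun P => #|P|)).
by rewrite genP andbT; apply/forall_inP.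
Qed.

Lemma MaxDim_attained : exists P,
  [/\ {in P, forall M, maximal M [set: gT]}, gen_position P & #|P| = MaxDim gT].
Proof.
pose admissible P := [forall M in P, maximal M [set: gT]] && gen_position P.
have [|P /andP[/forall_inP maxP genP] maxE] :=
  @eq_bigmax_cond _ admissible (fun P => #|P|).
  apply/card_gt0P; exists set0; rewrite unfold_in /admissible.
  by apply/andP; split; apply/forall_inP=> M; rewrite inE.
by exists P; split=> //; apply: esym maxE.
Qed.

Lemma leq_MaxDim_separated (I : finType) (S : {set I})
    (Y : I -> {set gT}) (x : I -> gT) :
    {in S, forall i, maximal (Y i) [set: gT]} ->
    {in S &, forall i j, (x i \in Y j) = (i != j)} ->
  #|S| <= MaxDim gT.
Proof.
move=> maxY sepY; have injY : {in S &, injective Y}.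
  move=> i j iS jS eqY; apply/eqP; rewrite -[i == j]negbK -sepY //.
  by rewrite -eqY sepY // eqxx.
rewrite -(card_in_imset injY); apply: leq_card_MaxDim.
  by move=> _ /imsetP[i iS ->]; apply: maxY.
apply/gen_positionP=> _ /imsetP[i iS ->]; exists (x i); last by rewrite sepY ?eqxx.
apply/bigcapP=> _ /andP[/imsetP[j jS ->] neYij]; rewrite sepY //.
by apply: contraNneq neYij => ->.
Qed.

Lemma leq_irr_num_separated (I : finType) (S : {set I})
    (L : I -> {group gT}) (x : I -> gT) :
  {in S &, forall i j, (x i \in L j) = (i != j)} -> #|S| <= irr_num gT.
Proof.
move=> sepL; have injx : {in S &, injective x}.
  move=> i j iS jS eqx; apply/eqP; rewrite -[i == j]negbK -sepL //.
  by rewrite eqx sepL // eqxx.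
rewrite -(card_in_imset injx).
apply: (@leq_bigmax_cond _ (@irredundant gT) (fun s => #|s|)).
apply/forall_inP=> _ /imsetP[j jS ->]; apply: contraTneq (mem_gen (imset_f x jS)).
move=> <-; have xjL : x j \notin L j by rewrite sepL ?eqxx.
apply: contra xjL; apply: subsetP; rewrite gen_subG.
apply/subsetP=> y /setD1P[neyxj /imsetP[i iS defy]].
by rewrite defy sepL //; apply: contraNneq neyxj => eqij; rewrite defy eqij.
Qed.

Lemma maximal_mulg_normal (G M E : {group gT}) :
  maximal M G -> E <| G -> ~~ (E \subset M) -> M * E = G.
Proof.
case/maxgroupP=> /andP[sMG _] maxM /andP[sEG nEG] not_sEM.
apply/eqP; rewrite eqEproper mul_subG //= -norm_joinEl ?(subset_trans sMG) //.
by apply: contra not_sEM => /maxM <-; rewrite ?joing_subl ?joing_subr.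
Qed.

Lemma minimal_subfamily (C : {set gT}) (P : {set {set gT}}) :
  exists T : {set {set gT}},
    [/\ T \subset P, C :&: \bigcap_(N in T) N \subset \bigcap_(N in P) N
       & {in T, forall t, ~~ (C :&: \bigcap_(N in T :\ t) N \subset t)}].
Proof.
pose covers (T : {set {set gT}}) :=
  (T \subset P) && (C :&: \bigcap_(N in T) N \subset \bigcap_(N in P) N).
have [|T /minsetP[/andP[sTP sCT] minT] _] := minset_exists (P := covers) (C := P).
  by rewrite /covers subxx subsetIr.
exists T; split=> // t tT; apply/negP=> sCt.
suff /setP/(_ t) : T :\ t = T by rewrite !inE eqxx tT.
apply: minT; last exact: subD1set.
rewrite /covers (subset_trans (subD1set T t) sTP) /=.
apply: subset_trans sCT; apply/subsetP=> y yCT; have yt := subsetP sCt y yCT.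
by case/setIP: yCT => yC yT; rewrite inE yC (big_setD1 t tT) inE yt.
Qed.

End MaximalFamilies.

Section PhiOver.

Variable gT : finGroupType.
Implicit Types X : {set gT}.

(* For X normal, the preimage of the Frattini subgroup of the quotient by X. *)
Definition Phi_over X : {set gT} :=
  \bigcap_(Y : {group gT} | maximal Y [set: gT] && (X \subset Y)) Y.

Canonical Phi_over_group X : {group gT} := Eval hnf in [group of Phi_over X].

Lemma sub_Phi_over X : X \subset Phi_over X.
Proof. by apply/bigcapsP=> Y /andP[]. Qed.

Lemma Phi_over_proper (X : {group gT}) :
  X \proper [set: gT] -> Phi_over X \proper [set: gT].
Proof.
move=> ltXT; have [eqXT | [Y maxY sXY]] := maximal_exists (subsetT X).
  by rewrite eqXT properxx in ltXT.
by apply: sub_proper_trans (maxgroupp maxY); apply: bigcap_inf; rewrite maxY.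
Qed.

Lemma Phi_over_normal X : X <| [set: gT] -> Phi_over X <| [set: gT].
Proof.
case/andP=> _ nXT; rewrite /normal subsetT /=; apply/subsetP=> g _.
rewrite inE; apply/subsetP=> _ /imsetP[a aJ ->]; apply/bigcapP=> Y /andP[maxY sXY].
have: a \in Y :^ g^-1.
  apply: (bigcapP aJ (Y :^ g^-1)%G).
  have /normP <- := subsetP nXT g^-1 (in_setT _).
  by rewrite conjSg sXY -(conjTg g^-1) maximalJ maxY.
by rewrite mem_conjg invgK.
Qed.

Lemma Phi_overPn X h :
  reflect (exists2 Y : {group gT}, maximal Y [set: gT] & (X \subset Y) && (h \notin Y))
          (h \notin Phi_over X).
Proof.
apply: (iffP idP) => [hJ | [Y maxY /andP[sXY hY]]]; last first.
  by apply: contra hY => /bigcapP; apply; rewrite maxY.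
have [Y /and3P[maxY sXY hY] | noY] := pickP [pred Y : {group gT} |
  [&& maximal Y [set: gT], X \subset Y & h \notin Y]].
  by exists Y; rewrite ?sXY.
case/negP: hJ; apply/bigcapP=> Y /andP[maxY sXY]; apply: negbNE.
by move: (noY Y); rewrite /= maxY sXY => /negbT.
Qed.

End PhiOver.

Section MorphpreMaximal.

Variables (gT rT : finGroupType) (f : {morphism [set: gT] >-> rT}).

Lemma morphpre_maximalT (Y : {group rT}) :
  f @* [set: gT] = [set: rT] -> maximal (f @*^-1 Y) [set: gT] = maximal Y [set: rT].
Proof.
move=> fT.
by rewrite -(@morphpre_maximal _ _ _ f _ [set: rT]%G) ?fT ?subsetT ?morphpreT.
Qed.

Lemma morphpre_normalT (R : {set rT}) :
  f @* [set: gT] = [set: rT] -> (f @*^-1 R <| [set: gT]) = (R <| [set: rT]).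
Proof.
by move=> fT; rewrite -(@morphpre_normal _ _ _ f R [set: rT]) ?fT ?subsetT ?morphpreT.
Qed.

End MorphpreMaximal.

Section DirectProduct.

Variables H K : finGroupType.
Local Notation G := (H * K)%type.

Lemma morphim_fstT : (@fst H K) @* [set: G] = [set: H].
Proof. by apply/setP=> x; rewrite inE; apply/morphimP; exists (x, 1). Qed.

Lemma morphim_sndT : (@snd H K) @* [set: G] = [set: K].
Proof. by apply/setP=> y; rewrite inE; apply/morphimP; exists (1, y). Qed.

Lemma maximal_setXl (Y : {set H}) :
  maximal Y [set: H] -> maximal (setX Y [set: K]) [set: G].
Proof.
move=> maxY; have gY := maximal_group_set maxY.
have -> : setX Y [set: K] = (@fst H K) @*^-1 (Group gY).
  by apply/setP=> -[a b]; rewrite !inE andbT.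
by rewrite morphpre_maximalT ?morphim_fstT.
Qed.

Lemma maximal_setXr (Y : {set K}) :
  maximal Y [set: K] -> maximal (setX [set: H] Y) [set: G].
Proof.
move=> maxY; have gY := maximal_group_set maxY.
have -> : setX [set: H] Y = (@snd H K) @*^-1 (Group gY).
  by apply/setP=> -[a b]; rewrite !inE.
by rewrite morphpre_maximalT ?morphim_sndT.
Qed.

Lemma MaxDim_setX_ge : MaxDim H + MaxDim K <= MaxDim G.
Proof.
have [PH [maxPH /gen_position_separated[xH sepH] <-]] := MaxDim_attained H.
have [PK [maxPK /gen_position_separated[xK sepK] <-]] := MaxDim_attained K.
pose S := inl @: PH :|: inr @: PK.
pose Y i : {set G} :=
  match i with inl A => setX A [set: K] | inr B => setX [set: H] B end.
pose x i : G := match i with inl A => (xH A, 1) | inr B => (1, xK B) end.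
have -> : #|PH| + #|PK| = #|S|.
  have disjS : inl @: PH :&: inr @: PK = set0.
    by apply/setP=> i; rewrite !inE; apply/andP=> -[/imsetP[A _ ->] /imsetP[B _]].
  by rewrite cardsU disjS cards0 subn0 !card_imset //; move=> ? ? [].
apply: (@leq_MaxDim_separated _ _ S Y x).
  move=> _ /setUP[] /imsetP[A AP ->].
    exact/maximal_setXl/maxPH.
  exact/maximal_setXr/maxPK.
move=> _ _ /setUP[] /imsetP[A AP ->] /setUP[] /imsetP[B BP ->] /=.
all: rewrite !inE ?andbT /=.
- exact: sepH.
- exact/maximal1/maxPK.
- exact/maximal1/maxPH.
- exact: sepK.
Qed.

Lemma ker_fst : 'ker (@fst H K) = setX 1 [set: K].
Proof. by apply/setP=> -[a b]; rewrite !inE andbT. Qed.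

Lemma setX_normal (J : {group H}) : J <| [set: H] -> setX J 1 <| [set: G].
Proof.
move=> nJ; have -> : setX J 1 = (@fst H K) @*^-1 J :&: (@snd H K) @*^-1 1.
  by apply/setP=> -[a b]; rewrite !inE.
by apply: normalI; rewrite morphpre_normalT ?morphim_fstT ?morphim_sndT ?normal1.
Qed.

Lemma morphim_fst_norm_pairg1_pre (M : {group G}) :
  (@fst H K) @* M \subset 'N((@pairg1 H K) @*^-1 M).
Proof.
apply/subsetP=> _ /morphimP[[g k] _ gkM ->]; rewrite inE.
apply/subsetP=> _ /imsetP[a aX ->].
rewrite !inE /= in aX *; move: (groupJ aX gkM).
by rewrite -[_ ^ _]/(a ^ g, 1 ^ k) conj1g.
Qed.

Lemma mulg_pairg1_pre_normal (M : {group G}) (J : {group H}) :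
    maximal M [set: G] -> J <| [set: H] -> ~~ (setX J 1 \subset M) ->
  (@pairg1 H K) @*^-1 M * J = [set: H].
Proof.
move=> maxM nJ not_sJM.
move/setP: (maximal_mulg_normal maxM (setX_normal nJ) not_sJM) => MJ.
apply/setP=> g; rewrite inE; have := MJ (g, 1); rewrite inE.
case/mulsgP=> -[m1 m2] [e1 e2] mM; rewrite !inE /= => /andP[e1J /eqP->] [-> m2_1].
by rewrite mulg1 in m2_1; rewrite mem_mulg // !inE /= /pairg1 m2_1.
Qed.

Lemma morphim_fst_maximal (M : {group G}) :
  maximal M [set: G] -> ~~ (setX 1 [set: K] \subset M) -> (@fst H K) @* M = [set: H].
Proof.
move=> maxM not_sKM; rewrite -ker_fst in not_sKM.
have := maximal_mulg_normal maxM (ker_normal _) not_sKM.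
move/(congr1 (morphim (MorPhantom (@fst H K)))).
by rewrite morphimMl ?subsetT // morphim_ker mulg1 morphim_fstT.
Qed.

Lemma maximal_sup_pairg1_pre (M : {group G}) (h : H) :
    maximal M [set: G] -> (h, 1) \notin M ->
  exists2 Y : {group H}, maximal Y [set: H]
                       & ((@pairg1 H K) @*^-1 M \subset Y) && (h \notin Y).
Proof.
move=> maxM hM; have [sKM | not_sKM] := boolP (setX 1 [set: K] \subset M).
  have defM : (@fst H K) @*^-1 ((@fst H K) @* M) = M.
    by rewrite morphimGK ?ker_fst ?subsetT.
  exists ((@fst H K) @* M)%G; first by rewrite -(morphpre_maximalT _ morphim_fstT) defM.
  rewrite -defM !inE /= in hM; rewrite hM andbT.
  by apply/subsetP=> a; rewrite !inE /= => a1M; apply/morphimP; exists (a, 1).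
(* Otherwise M projects onto H, so the intersection J of the maximal subgroups
   above X is normal; if h were in J, then M (J * 1) = H * K would force J = H. *)
set X := (@pairg1 H K) @*^-1 M.
have nXT : X <| [set: H].
  rewrite /normal subsetT -(morphim_fst_maximal maxM not_sKM).
  exact: morphim_fst_norm_pairg1_pre.
have ltXT : X \proper [set: H] by apply/properP; split=> //; exists h; rewrite ?inE.
apply/Phi_overPn; apply/negP=> hJ.
have not_sJM : ~~ (setX (Phi_over X) 1 \subset M).
  by apply: contra hM => /subsetP; apply; rewrite !inE hJ eqxx.
have := mulg_pairg1_pre_normal maxM (Phi_over_normal nXT) not_sJM.
rewrite mulSGid ?sub_Phi_over // => defJ.
by have := Phi_over_proper ltXT; rewrite defJ properxx.
Qed.

Lemma leq_MaxDim_setX1 (T : {set {set G}}) :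
    {in T, forall t, maximal t [set: G]} ->
    {in T, forall t, ~~ (setX [set: H] 1 :&: \bigcap_(N in T :\ t) N \subset t)} ->
  #|T| <= MaxDim H.
Proof.
move=> maxT sepT.
have /fin_all_exists[hY hYP] : forall t, exists hY : H * {group H}, t \in T ->
    [/\ (hY.1, 1) \in \bigcap_(N in T :\ t) N, maximal hY.2 [set: H]
      & ((@pairg1 H K) @*^-1 t \subset hY.2) && (hY.1 \notin hY.2)].
  move=> t; have [tT | _] := boolP (t \in T); last by exists (1, 1%G).
  have /subsetPn[[h k] /setIP[]] := sepT t tT; rewrite !inE /= => /eqP-> hT ht.
  have gt := maximal_group_set (maxT t tT).
  have [Y maxY sepY] := maximal_sup_pairg1_pre (M := Group gt) (maxT t tT) ht.
  by exists (h, Y).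
apply: (@leq_MaxDim_separated _ _ T (fun t => gval (hY t).2) (fun t => (hY t).1)).
  by move=> t /hYP[].
move=> i j iT jT /=; have [hi_T _ /andP[_ hiY]] := hYP i iT.
have [<- | neij] := eqVneq i j; first exact: negbTE.
have [_ _ /andP[sjY _]] := hYP j jT; apply: (subsetP sjY); rewrite !inE /=.
by apply: (bigcapP hi_T); rewrite !inE eq_sym neij.
Qed.

Lemma leq_irr_num_setX1 (P T : {set {set G}}) :
    {in P, forall M, maximal M [set: G]} -> gen_position P -> T \subset P ->
    setX [set: H] 1 :&: \bigcap_(N in T) N \subset \bigcap_(N in P) N ->
  #|P :\: T| <= irr_num K.
Proof.
move=> maxP /gen_position_separated[x sepP] sTP sCT.
have gP M : M \in P -> group_set M by move/maxP/maximal_group_set.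
have gcapT : group_set (\bigcap_(N in T) N).
  by apply: group_set_bigcap_in => N /(subsetP sTP)/gP.
pose L (j : {set G}) := [group of (@snd H K) @* <<j :&: \bigcap_(N in T) N>>].
apply: (@leq_irr_num_separated _ _ (P :\: T) L (fun j => (x j).2)).
move=> i j /setDP[iP iT] /setDP[jP jT] /=.
have xiT : x i \in \bigcap_(N in T) N.
  apply/bigcapP=> N NT; rewrite sepP ?(subsetP sTP N NT) //.
  by apply: contraNneq iT => ->.
have [<- | neij] := eqVneq i j; last first.
  apply/morphimP; exists (x i) => //; apply: mem_gen.
  by rewrite inE xiT sepP // neij.
pose gi := Group (gP i iP); pose capT := Group gcapT.
apply/negP=> /morphimP[m _]; rewrite gen_set_id ?(valP (setI_group gi capT)) //.
case/setIP=> mi mT eqm; pose c := m^-1 * x i.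
have cC : c \in setX [set: H] 1 by rewrite !inE /= eqm mulVg.
have cT : c \in capT by rewrite groupM ?groupV.
have /bigcapP/(_ i iP) ci : c \in \bigcap_(N in P) N.
  by apply: (subsetP sCT); rewrite inE cC.
have : x i \in gi by rewrite -(mulKVg m (x i)) groupM.
by rewrite /= sepP ?eqxx.
Qed.

End DirectProduct.

Theorem proposition2p6 (H K : finGroupType) :
  MaxDim K = irr_num K ->
  MaxDim (H * K)%type = MaxDim H + MaxDim K.
Proof.
move=> dimK; apply/eqP; rewrite eqn_leq MaxDim_setX_ge andbT dimK.
have [P [maxP genP <-]] := MaxDim_attained (H * K)%type.
have [T [sTP sCT sepT]] := minimal_subfamily (setX [set: H] 1) P.
rewrite -(cardsID T P) (setIidPr sTP) leq_add ?leq_irr_num_setX1 //.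
by apply: leq_MaxDim_setX1 => // t /(subsetP sTP)/maxP.
Qed.
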